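(* For $n=3$ agents and $3$ items with the unit-range normalization, every ordinal mechanism $J$ (deterministic or randomized) satisfies $ar(J)\le 2/3$.
   Context: Agents $N=\{1,2,3\}$, items $M=\{1,2,3\}$, outcomes are bijections $\mu$ ($O$ the set of outcomes). Unit-range valuation functions: injective $u_i:M\to\mathbb R$ with $\max_j u_i(j)=1$ and $\min_j u_i(j)=0$; $V^3$ the set of profiles. A mechanism maps each profile to a distribution over $O$; it is ordinal if its output distribution is unchanged when any one agent's valuation function is replaced by another inducing the same ordering of the items. $ar(J)=\inf_{\mathbf u\in V^3}\mathbb E[\sum_i u_i(J(\mathbf u)_i)]/\max_{\mu\in O}\sum_i u_i(\mu_i)$. *)

From mathcomp Require Import all_boot all_fingroup.
From Stdlib Require Import Reals.
Set Implicit Arguments. Unset Strict Implicit. Unset Printing Implicit Defensive.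
Open Scope R_scope.

Definition agent := 'I_3.
Definition item := 'I_3.
(* outcomes: bijections mu : agents -> items (mu i = item of agent i) *)
Definition outcome := {perm 'I_3}.

Definition valuation := item -> R.
Definition profile := agent -> valuation.

Definition unit_range (v : valuation) : Prop :=
  injective v /\ (exists j, v j = 1) /\ (exists j, v j = 0) /\
  (forall j, 0 <= v j <= 1).

Definition valid_profile (u : profile) : Prop := forall i, unit_range (u i).

(* a (randomized) mechanism: profile -> distribution over outcomes *)
Definition mechanism := profile -> outcome -> R.

Definition is_mechanism (J : mechanism) : Prop :=
  forall u, valid_profile u ->
    (forall mu, 0 <= J u mu) /\ \big[Rplus/0]_(mu : outcome) J u mu = 1.

Definition same_ordering (v w : valuation) : Prop :=
  forall j k, v j < v k <-> w j < w k.

Definition update (u : profile) (i : agent) (v : valuation) : profile :=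
  fun k => if k == i then v else u k.

Definition ordinal_mech (J : mechanism) : Prop :=
  forall u i v, valid_profile u -> unit_range v -> same_ordering (u i) v ->
    forall mu, J (update u i v) mu = J u mu.

Definition welfare (u : profile) (mu : outcome) : R :=
  \big[Rplus/0]_(i : agent) u i (mu i).

Definition exp_welfare (J : mechanism) (u : profile) : R :=
  \big[Rplus/0]_(mu : outcome) (J u mu * welfare u mu).

(* welfare is nonnegative, so 0 is a safe seed for the max *)
Definition opt_welfare (u : profile) : R :=
  \big[Rmax/0]_(mu : outcome) welfare u mu.

(* ar(J) <= c, unfolded: the infimum over V^3 of the ratio is <= c *)
Definition ar_le (J : mechanism) (c : R) : Prop :=
  forall eps, 0 < eps -> exists u, valid_profile u /\
    exp_welfare J u / opt_welfare u < c + eps.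

(* Give all three agents the valuation (1, d, 0) and let i be the agent who
   receives the middle item with probability at most 1/3.  Raising i's middle
   value to 1 - d keeps every ordering, so an ordinal mechanism does not react:
   its expected welfare is at most 1 + d + (1 - 2d)/3, whereas handing the
   middle item to i achieves 2 - d.  The ratio tends to 2/3 as d goes to 0. *)
From HB Require Import structures.
From mathcomp Require Import all_boot all_fingroup.
From Stdlib Require Import Reals Lra.
Set Implicit Arguments. Unset Strict Implicit.
Open Scope R_scope.

HB.instance Definition _ := Monoid.isComLaw.Build R 0 Rplus
  (fun x y z => esym (Rplus_assoc x y z)) Rplus_comm Rplus_0_l.

Lemma big_Rmult_distrr {T : finType} (a : R) (F : T -> R) :
  \big[Rplus/0]_(x : T) (a * F x) = a * \big[Rplus/0]_(x : T) F x.
Proof. by apply: (big_rec2 (fun s t => s = a * t)) => [|x s t _ ->]; ring. Qed.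

Lemma bigRmax_ge {T : finType} (F : T -> R) (x : T) :
  F x <= \big[Rmax/0]_(y : T) F y.
Proof.
have: x \in index_enum T by rewrite mem_index_enum.
elim: (index_enum T) => // y r IH.
rewrite in_cons big_cons => /orP [/eqP <-|/IH le_Fx]; first exact: Rmax_l.
exact: Rle_trans le_Fx (Rmax_r _ _).
Qed.

Lemma big_perm_reindex {T : finType} (s : {perm T}) (F : T -> R) :
  \big[Rplus/0]_(x : T) F (s x) = \big[Rplus/0]_(x : T) F x.
Proof. by rewrite [RHS](reindex_inj (@perm_inj _ s)). Qed.

Lemma exists_le_third (Q : 'I_3 -> R) :
  \big[Rplus/0]_(k : 'I_3) Q k = 1 -> exists k, Q k <= 1 / 3.
Proof.
rewrite !big_ord_recr big_ord0 /= => sumQ.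
case: (Rle_dec (Q ord0) (1 / 3)) => [|Q0]; first by exists ord0.
case: (Rle_dec (Q (inord 1)) (1 / 3)) => [|Q1]; first by exists (inord 1).
exists ord_max; move: sumQ.
have -> : widen_ord (leqnSn 2) (widen_ord (leqnSn 1) ord_max) = ord0 by exact: val_inj.
have -> : widen_ord (leqnSn 2) ord_max = inord 1 by apply: val_inj; rewrite /= inordK.
lra.
Qed.

Definition mid_item : item := @Ordinal 3 1 isT.

Definition mid_val (d : R) : valuation :=
  fun j => match nat_of_ord j with 0 => 1 | 1 => d | _ => 0 end.

Lemma mid_val_unit_range (d : R) : 0 < d < 1 -> unit_range (mid_val d).
Proof.
move=> d01; split; [|split; [|split]].
- move=> [[|[|[|m]]] Hm] [[|[|[|m']]] Hm'] //= eq_v;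
    rewrite /mid_val /= in eq_v; by [apply: val_inj | lra].
- by exists ord0.
- by exists ord_max.
- by move=> [[|[|[|m]]] Hm] //=; rewrite /mid_val /=; lra.
Qed.

Lemma mid_val_same_ordering (d e : R) :
  0 < d < 1 -> 0 < e < 1 -> same_ordering (mid_val d) (mid_val e).
Proof.
by move=> d01 e01 [[|[|[|m]]] Hm] //= [[|[|[|m']]] Hm'] //=; rewrite /mid_val /=; lra.
Qed.

Lemma sum_mid_val (d : R) : \big[Rplus/0]_(j : item) mid_val d j = 1 + d.
Proof. by rewrite !big_ord_recr big_ord0 /mid_val /=; lra. Qed.

Definition gets_mid (mu : outcome) (k : agent) : R :=
  if mu k == mid_item then 1 else 0.

Lemma sum_gets_mid (mu : outcome) : \big[Rplus/0]_(k : agent) gets_mid mu k = 1.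
Proof.
rewrite (big_perm_reindex mu (fun j => if j == mid_item then 1 else 0)).
by rewrite !big_ord_recr big_ord0 /=; lra.
Qed.

Section Deviation.

Variables (d : R) (i : agent).

Definition uniform_profile : profile := fun _ => mid_val d.

Definition deviated_profile : profile :=
  update uniform_profile i (mid_val (1 - d)).

Hypothesis d01 : 0 < d < 1.

Lemma uniform_profile_valid : valid_profile uniform_profile.
Proof. by move=> k; apply: mid_val_unit_range. Qed.

Lemma deviated_profile_valid : valid_profile deviated_profile.
Proof.
move=> k; rewrite /deviated_profile /update; case: eqP => _;
  [apply: mid_val_unit_range; lra | exact: uniform_profile_valid].
Qed.

Lemma ordinal_mech_deviated (J : mechanism) :
  ordinal_mech J -> forall mu, J deviated_profile mu = J uniform_profile mu.
Proof.
move=> J_ord mu; apply: J_ord; first exact: uniform_profile_valid.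
  by apply: mid_val_unit_range; lra.
by apply: mid_val_same_ordering; lra.
Qed.

Lemma welfare_deviated (mu : outcome) :
  welfare deviated_profile mu = 1 + d + (1 - 2 * d) * gets_mid mu i.
Proof.
have sum_others : mid_val d (mu i) +
    \big[Rplus/0]_(k : agent | k != i) mid_val d (mu k) = 1 + d.
  by rewrite -(sum_mid_val d) -(big_perm_reindex mu) [RHS](bigD1 i).
rewrite /welfare (bigD1 i) //= /deviated_profile /update eqxx.
rewrite (eq_bigr (fun k => mid_val d (mu k))); last by move=> k /negbTE ->.
(* The two sums differ only in the canonical finType instance of their index,
   which [lra] cannot see through, so abstract them. *)
move: (\big[Rplus/0]_(k < 3 | k != i) mid_val d (mu k)) sum_others => others.
rewrite /gets_mid.
by case: (mu i) => [[|[|[|m]]] Hm] //=; rewrite /mid_val /=; lra.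
Qed.

Lemma exp_welfare_deviated (J : mechanism) :
  (forall mu, J deviated_profile mu = J uniform_profile mu) ->
  \big[Rplus/0]_(mu : outcome) J uniform_profile mu = 1 ->
  exp_welfare J deviated_profile =
  1 + d + (1 - 2 * d) *
    \big[Rplus/0]_(mu : outcome) (J uniform_profile mu * gets_mid mu i).
Proof.
move=> J_dev sumJ; rewrite /exp_welfare.
have -> : \big[Rplus/0]_(mu : outcome) (J deviated_profile mu * welfare deviated_profile mu)
    = \big[Rplus/0]_(mu : outcome) ((1 + d) * J uniform_profile mu +
        (1 - 2 * d) * (J uniform_profile mu * gets_mid mu i)).
  by apply: eq_bigr => mu _; rewrite J_dev welfare_deviated; ring.
by rewrite big_split /= !big_Rmult_distrr sumJ Rmult_1_r.
Qed.

Lemma opt_welfare_deviated_ge : 2 - d <= opt_welfare deviated_profile.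
Proof.
apply: Rle_trans (bigRmax_ge (welfare deviated_profile) (tperm i mid_item)).
by rewrite welfare_deviated /gets_mid tpermL eqxx; lra.
Qed.

End Deviation.

Lemma ratio_lt_two_thirds (eps d q w : R) :
  0 < eps -> 0 < d -> d <= eps / 2 -> d <= 1 / 4 -> 0 <= q <= 1 / 3 ->
  2 - d <= w -> (1 + d + (1 - 2 * d) * q) / w < 2 / 3 + eps.
Proof.
move=> eps_gt0 d_gt0 d_le_eps d_le q01 w_ge.
apply/(Rmult_lt_reg_r w); first lra.
rewrite /Rdiv Rmult_assoc Rinv_l ?Rmult_1_r; last lra.
have : (2 / 3 + eps) * (2 - d) <= (2 / 3 + eps) * w by apply: Rmult_le_compat_l; lra.
have : (1 - 2 * d) * q <= (1 - 2 * d) * (1 / 3) by apply: Rmult_le_compat_l; lra.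
nra.
Qed.

Theorem mainTheorem13 (J : mechanism) :
  is_mechanism J -> ordinal_mech J -> ar_le J (2 / 3).
Proof.
move=> J_mech J_ord eps eps_gt0.
pose d := Rmin (eps / 2) (1 / 4).
have d_gt0 : 0 < d by apply: Rmin_glb_lt; lra.
have [d_le_eps d_le] : d <= eps / 2 /\ d <= 1 / 4 by split; [apply: Rmin_l | apply: Rmin_r].
have d01 : 0 < d < 1 by lra.
have [J_ge0 sumJ] := J_mech _ (uniform_profile_valid d01).
pose Q k := \big[Rplus/0]_(mu : outcome) (J (uniform_profile d) mu * gets_mid mu k).
have [i Qi_le] : exists i, Q i <= 1 / 3.
  apply: exists_le_third; rewrite /Q exchange_big /= -sumJ.
  by apply: eq_bigr => mu _; rewrite big_Rmult_distrr sum_gets_mid; ring.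
have Qi_ge0 : 0 <= Q i.
  apply: (big_ind (Rle 0)) => [|x y ? ?|mu _]; try lra.
  by apply: Rmult_le_pos (J_ge0 mu) _; rewrite /gets_mid; case: ifP => _; lra.
exists (deviated_profile d i); split; first exact: deviated_profile_valid.
rewrite (exp_welfare_deviated (ordinal_mech_deviated i d01 J_ord) sumJ).
by apply: ratio_lt_two_thirds => //; exact: opt_welfare_deviated_ge.
Qed.
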